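(* Let $A$ be a left brace and let $a\in A$ be an element of infinite additive order. Let $c=a\star a$ and suppose that $a\star c=0$. Then $\langle a\rangle\cap\langle c\rangle=0$, where $\langle x\rangle$ denotes the cyclic subgroup of $(A,+)$ generated by $x$. In particular, if $a\in\zeta_2(\star,A)$ (and $a$ has infinite additive order), then $\langle a\rangle\cap\langle a\star a\rangle=0$.
   Context: A left brace is a set $A$ with two operations $+$ and $\cdot$ such that $(A,+)$ is an abelian group, $(A,\cdot)$ is a group, and $a(b+c)=ab+ac-a$ for all $a,b,c\in A$. Put $a\star b=ab-a-b$. The $\star$-center is $\zeta(\star,A)=\{a: a\star x=x\star a=0\ \forall x\in A\}$, an ideal of $A$; $\zeta_2(\star,A)$ is defined by $\zeta_2(\star,A)/\zeta(\star,A)=\zeta(\star,A/\zeta(\star,A))$. *)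

From HB Require Import structures.
From mathcomp Require Import all_boot all_algebra.
Set Implicit Arguments. Unset Strict Implicit. Unset Printing Implicit Defensive.
Import GRing.Theory.
Local Open Scope ring_scope.

Record left_brace (A : zmodType) := LeftBrace {
  bmul : A -> A -> A;
  bone : A;
  binv : A -> A;
  bmulA : forall x y z, bmul x (bmul y z) = bmul (bmul x y) z;
  bmul1l : forall x, bmul bone x = x;
  bmul1r : forall x, bmul x bone = x;
  bmulVl : forall x, bmul (binv x) x = bone;
  bmulVr : forall x, bmul x (binv x) = bone;
  bdistr : forall x y z, bmul x (y + z) = bmul x y + bmul x z - x
}.

Definition bstar (A : zmodType) (B : left_brace A) (x y : A) : A :=
  bmul B x y - x - y.

Definition star_center (A : zmodType) (B : left_brace A) (x : A) : Prop :=
  forall y, bstar B x y = 0 /\ bstar B y x = 0.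

(* zeta_2(star, A): a + zeta is star-central in A / zeta, i.e. (since the
   operations of the quotient brace are computed on representatives)
   a star x and x star a lie in zeta(star, A) for all x. *)
Definition star_center2 (A : zmodType) (B : left_brace A) (x : A) : Prop :=
  forall y, star_center B (bstar B x y) /\ star_center B (bstar B y x).

Definition in_cyclic (A : zmodType) (x y : A) : Prop :=
  exists k : int, y = x *~ k.

Definition cyclic_cap_trivial (A : zmodType) (x y : A) : Prop :=
  forall z, in_cyclic x z -> in_cyclic y z -> z = 0.

Definition infinite_add_order (A : zmodType) (x : A) : Prop :=
  forall n : nat, (0 < n)%N -> x *+ n <> 0.

(* Since a(x + y) = ax + ay - a, the map x |-> a ⋆ x is additive on (A,+).
   If z = m a = n c with c = a ⋆ a, applying it gives m c = n (a ⋆ c) = 0,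
   hence m^2 a = m z = n (m c) = 0; as a has infinite order, m = 0 and z = 0. *)

From HB Require Import structures.
From mathcomp Require Import all_boot all_algebra.
Set Implicit Arguments.
Unset Strict Implicit.
Unset Printing Implicit Defensive.
Import GRing.Theory.
Local Open Scope ring_scope.

Section StarAdditive.

Variables (A : zmodType) (B : left_brace A) (a : A).

Lemma bstarDr : {morph bstar B a : x y / x + y}.
Proof.
by move=> x y; rewrite /bstar bdistr [RHS]addrACA -opprD [in RHS]addrACA !addrA.
Qed.

Lemma bstar0r : bstar B a 0 = 0.
Proof. by apply: (@addrI _ (bstar B a 0)); rewrite -bstarDr !addr0. Qed.

Lemma bstar_nmod_morphism : nmod_morphism (bstar B a).
Proof. by split; [exact: bstar0r | exact: bstarDr]. Qed.

HB.instance Definition _ :=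
  GRing.isNmodMorphism.Build A A (bstar B a) bstar_nmod_morphism.

Lemma bstarMzr x k : bstar B a (x *~ k) = bstar B a x *~ k.
Proof. exact: raddfMz. Qed.

End StarAdditive.

Lemma infinite_add_order_mulrz_eq0 (A : zmodType) (a : A) k :
  infinite_add_order a -> a *~ k = 0 -> k = 0.
Proof.
move=> a_inf; case: (intP k) => // n; rewrite ?mulrNz => /eqP.
all: by rewrite ?oppr_eq0 => /eqP an0; case: (a_inf n.+1).
Qed.

Lemma cyclic_cap_star_self_trivial (A : zmodType) (B : left_brace A) (a : A) :
  infinite_add_order a -> bstar B a (bstar B a a) = 0 ->
  cyclic_cap_trivial a (bstar B a a).
Proof.
set c := bstar B a a => a_inf ac0 z [m ->] [n zE].
have cm0 : c *~ m = 0 by rewrite -bstarMzr zE bstarMzr ac0 mul0rz.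
have /(infinite_add_order_mulrz_eq0 a_inf)/eqP : a *~ (m * m) = 0.
  by rewrite mulrzA zE -mulrzA mulrC mulrzA cm0 mul0rz.
by rewrite mulf_eq0 orbb => /eqP->.
Qed.

Lemma star_center2_star_self (A : zmodType) (B : left_brace A) (a : A) :
  star_center2 B a -> bstar B a (bstar B a a) = 0.
Proof. by move=> a_center2; have [/(_ a)[]] := a_center2 a. Qed.

Theorem proposition3p3 (A : zmodType) (B : left_brace A) (a : A) :
  infinite_add_order a ->
  (bstar B a (bstar B a a) = 0%R -> cyclic_cap_trivial a (bstar B a a)) /\
  (star_center2 B a -> cyclic_cap_trivial a (bstar B a a)).
Proof.
move=> a_inf; split; first exact: cyclic_cap_star_self_trivial.
by move/star_center2_star_self; apply: cyclic_cap_star_self_trivial.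
Qed.
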